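(* Let $\mathcal K$ be a quantum channel on $n\times n$ matrices described by Kraus operators $K_1,\dots,K_d\in\mathbb C^{n\times n}$ (with $\mathcal K(\rho)=\sum_j K_j\rho K_j^\dagger$, $\sum_j K_j^\dagger K_j=I_n$) such that $K_1=\alpha I_n$ for some $\alpha\in\mathbb C$ and $\mathrm{Tr}(K_j)=0$ for $j=2,\dots,d$. Then $\lVert\mathcal K\rVert=\cos^{-1}\lvert\alpha\rvert$, with $\cos^{-1}$ taking values in $[0,\pi]$.
   Context: For a unitary matrix $U$ of size $r$ with eigenvalues $e^{i\theta_j}$, $\theta_j\in(-\pi,\pi]$, its time-energy cost is $\lVert U\rVert=\max_{1\le j\le r}|\theta_j|$. For a quantum channel $\mathcal K$ acting on an $n$-dimensional system $A$, its time-energy cost is $\lVert\mathcal K\rVert=\inf_U\lVert U\rVert$, where the infimum is over all finite-dimensional ancilla systems $B$ with a fixed standard state $|0\rangle_B$ and all unitaries $U_{BA}$ on $B\otimes A$ such that $\mathcal K(\rho)=\mathrm{Tr}_B[U_{BA}(|0\rangle_B\langle 0|\otimes\rho_A)U_{BA}^\dagger]$ for all density matrices $\rho$ on $A$. *)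

From HB Require Import structures.
From mathcomp Require Import all_boot all_order all_algebra.
From mathcomp Require Import all_classical all_reals.
From mathcomp Require Import trigo.
From mathcomp Require Import complex mxtens.
Set Implicit Arguments. Unset Strict Implicit. Unset Printing Implicit Defensive.
Import Order.TTheory GRing.Theory Num.Theory.
Local Open Scope ring_scope.
Local Open Scope complex_scope.

Definition adj {R : realType} {m p : nat} (A : 'M[R[i]]_(m, p)) : 'M[R[i]]_(p, m) :=
  (map_mx (fun z : R[i] => z^*) A)^T.

Definition unitary {R : realType} {r : nat} (U : 'M[R[i]]_r) : Prop :=
  adj U *m U = 1%:M /\ U *m adj U = 1%:M.

Definition expi {R : realType} (t : R) : R[i] := (cos t) +i* (sin t).

Definition unitary_cost {R : realType} {r : nat} (U : 'M[R[i]]_r) : R :=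
  sup [set `|t| | t in [set t : R | - pi < t <= pi /\ eigenvalue U (expi t)]]%classic.

Definition psd {R : realType} {n : nat} (rho : 'M[R[i]]_n) : Prop :=
  forall v : 'cV[R[i]]_n, 0 <= (adj v *m rho *m v) 0 0.

Definition density {R : realType} {n : nat} (rho : 'M[R[i]]_n) : Prop :=
  psd rho /\ \tr rho = 1.

(* partial trace over the first tensor factor B of B (x) A *)
Definition ptraceB {R : realType} {m n : nat} (X : 'M[R[i]]_(m * n)) : 'M[R[i]]_n :=
  \matrix_(a, a') \sum_(b < m) X (mxtens_index (b, a)) (mxtens_index (b, a')).

(* U_{BA} implements the channel Phi with ancilla B of dimension m.+1 and
   standard state |0>_B *)
Definition implements {R : realType} {n m : nat}
  (Phi : 'M[R[i]]_n -> 'M[R[i]]_n) (U : 'M[R[i]]_(m.+1 * n)) : Prop :=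
  unitary U /\
  forall rho : 'M[R[i]]_n, density rho ->
    Phi rho = ptraceB (U *m ((delta_mx 0 0 : 'M[R[i]]_m.+1) *t rho) *m adj U).

Definition channel_cost {R : realType} {n : nat} (Phi : 'M[R[i]]_n -> 'M[R[i]]_n) : R :=
  inf [set c : R | exists (m : nat) (U : 'M[R[i]]_(m.+1 * n)),
                      implements Phi U /\ c = unitary_cost U]%classic.

Definition kraus_channel {R : realType} {n d : nat} (K : 'I_d -> 'M[R[i]]_n)
  (rho : 'M[R[i]]_n) : 'M[R[i]]_n :=
  \sum_(j < d) K j *m rho *m adj (K j).

(* Let U be any unitary dilation of the channel, with ancilla B.  Its blocks
   K'_b = <b|U|0> form another Kraus family of the same channel, and
   sum_j |tr K_j|^2 depends only on the channel (by polarization it is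
   sum_{k,l} <k|K(|k><l|)|l>); for the given family it is n^2 |alpha|^2, so
   Re tr K'_0 <= n |alpha|.  If all eigenphases of U were smaller than
   acos |alpha|, all its eigenvalues would have real part > |alpha|, hence so
   would the diagonal entries of the normal matrix U, and Re tr K'_0 > n |alpha|.

   Conversely, with P = |0><0| (x) I and T = sum_{b <> 0} |b><0| (x) K_b one has
   T^* T = (1 - |alpha|^2) P, and
     W = 1 - (1 - |alpha|) P - T T^* / (1 + |alpha|) + T - T^*
   rotates each plane spanned by x and T x (x in the range of P) by the angle
   acos |alpha| and fixes their orthogonal complement.  So W is unitary with
   eigenphases 0 and +-acos |alpha|, and W P = |alpha| P + T shows that W
   dilates the channel with Kraus operators |alpha| I, K_2, ..., K_d, which
   is the given one. *)

From HB Require Import structures.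
From mathcomp Require Import all_boot all_order all_algebra.
From mathcomp Require Import all_classical all_reals.
From mathcomp Require Import trigo.
From mathcomp Require Import complex mxtens.
From mathcomp Require Import spectral.
From mathcomp Require Import ring lra.
Set Implicit Arguments. Unset Strict Implicit. Unset Printing Implicit Defensive.
Import Order.TTheory GRing.Theory Num.Theory.
Local Open Scope ring_scope.
Local Open Scope complex_scope.

Section RotationAlgebra.
Variables (F : fieldType) (A : algType F).
Variables (P T Ts : A) (c : F).

Local Notation s2 := (1 - c ^+ 2).
Local Notation a := (1 - c).
Local Notation b := (1 + c)^-1.
Local Notation G := (T * Ts).

Hypotheses (P_idem : P * P = P) (PT : P * T = 0) (TP : T * P = T)
  (TsP : Ts * P = 0) (PTs : P * Ts = Ts) (TsT : Ts * T = s2 *: P).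
Hypothesis c_neqN1 : 1 + c != 0.

Let b_s2 : b * s2 = a.
Proof. by field. Qed.

Let c_a : (1 + c) * a = s2.
Proof. by ring. Qed.

Let TT : T * T = 0. Proof. by rewrite -{1}TP -mulrA PT mulr0. Qed.
Let TsTs : Ts * Ts = 0. Proof. by rewrite -{2}PTs mulrA TsP mul0r. Qed.
Let PG : P * G = 0. Proof. by rewrite mulrA PT mul0r. Qed.
Let GP : G * P = 0. Proof. by rewrite -mulrA TsP mulr0. Qed.
Let GT : G * T = s2 *: T. Proof. by rewrite -mulrA TsT -scalerAr TP. Qed.
Let TsG : Ts * G = s2 *: Ts. Proof. by rewrite mulrA TsT -scalerAl PTs. Qed.
Let TG : T * G = 0. Proof. by rewrite mulrA TT mul0r. Qed.
Let GTs : G * Ts = 0. Proof. by rewrite -mulrA TsTs mulr0. Qed.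
Let GG : G * G = s2 *: G. Proof. by rewrite -mulrA TsG -scalerAr. Qed.

Definition rot_sym : A := a *: P + b *: G.
Definition rot_skew : A := T - Ts.
Definition rotation : A := 1 - rot_sym + rot_skew.
Definition rotation_inv : A := 1 - rot_sym - rot_skew.

Local Notation X := rot_sym.
Local Notation Y := rot_skew.

Let XP : X * P = a *: P.
Proof. by rewrite mulrDl -!scalerAl P_idem GP scaler0 addr0. Qed.

Let YP : Y * P = T.
Proof. by rewrite mulrBl TP TsP subr0. Qed.

Let XY : X * Y = a *: Y.
Proof.
rewrite /rot_skew mulrBr !mulrDl -!scalerAl PT PTs GT GTs scalerA b_s2.
by rewrite !scaler0 add0r addr0 scalerBr.
Qed.

Let YX : Y * X = a *: Y.
Proof.
rewrite /rot_skew mulrBl !mulrDr -!scalerAr TP TG TsP TsG scalerA b_s2.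
by rewrite !scaler0 addr0 add0r scalerBr.
Qed.

Let XX : X * X = a *: X.
Proof.
rewrite {1}/rot_sym mulrDl -!scalerAl !mulrDr -!scalerAr.
rewrite P_idem PG GP GG !scaler0 addr0 add0r scalerDr; congr (_ + _).
by rewrite !scalerA -mulrA b_s2 mulrC.
Qed.

Let YY : Y * Y = - (s2 *: P + G).
Proof. by rewrite /rot_skew mulrBr !mulrBl TT TsTs TsT sub0r subr0 opprD. Qed.

Let sym_sqr : (1 - X) * (1 - X) = 1 + Y * Y.
Proof.
have sX : (1 + c) *: X = s2 *: P + G.
  by rewrite scalerDr !scalerA c_a mulfV // scale1r.
have twoX : X + (X - a *: X) = (1 + c) *: X.
  by rewrite -{1 2}(scale1r X) -scalerBl -scalerDl; congr (_ *: X); ring.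
by rewrite YY mulrBr !mulrBl !mul1r mulr1 XX -addrA -opprD twoX sX.
Qed.

Let sym_skew_comm : (1 - X) * Y = Y * (1 - X).
Proof. by rewrite mulrBl [Y * _]mulrBr mul1r mulr1 XY YX. Qed.

Lemma rotation_invK : rotation_inv * rotation = 1.
Proof.
rewrite /rotation /rotation_inv mulrBl [(1 - X) * _]mulrDr [Y * _]mulrDr.
rewrite sym_skew_comm sym_sqr.
by rewrite [Y * _ + Y * Y]addrC -[1 + _ + _]addrA addrK.
Qed.

Lemma rotationK : rotation * rotation_inv = 1.
Proof.
rewrite /rotation /rotation_inv mulrDl [(1 - X) * _]mulrBr [Y * _]mulrBr.
rewrite -sym_skew_comm sym_sqr.
by rewrite addrA subrK addrK.
Qed.

Lemma rotation_proj : rotation * P = c *: P + T.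
Proof.
rewrite mulrDl mulrBl mul1r XP YP -{1}(scale1r P) -scalerBl.
by congr (_ *: _ + _); ring.
Qed.

Let skew_sym_annih : (Y - X) * (a%:A - X) = 0.
Proof.
rewrite mulrBr [(Y - X) * a%:A]mulrBl [(Y - X) * X]mulrBl !mulr_algr YX XX.
exact: subrr.
Qed.

Let rotation_sum : rotation + rotation_inv - (c *+ 2)%:A = 2%:R *: (a%:A - X).
Proof.
rewrite /rotation /rotation_inv addrACA subrr addr0 -mulr2n -scaler_nat.
rewrite -[(c *+ 2)%:A]scalerMnl -scaler_nat -scalerBr; congr (_ *: _).
by rewrite scalerBl scale1r addrAC.
Qed.

Lemma rotation_poly :
  (rotation - 1) * (rotation * rotation - (c *+ 2) *: rotation + 1) = 0.
Proof.
have -> : rotation - 1 = Y - X by rewrite /rotation addrAC [1 - X]addrC addrK addrC.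
have -> : rotation * rotation - (c *+ 2) *: rotation + 1 =
    (rotation + rotation_inv - (c *+ 2)%:A) * rotation.
  by rewrite [in RHS]mulrBl [in RHS]mulrDl rotation_invK mulr_algl addrAC.
by rewrite rotation_sum -scalerAl scalerAr mulrA skew_sym_annih mul0r.
Qed.

Section Star.
Variables (conjF : {rmorphism F -> F}) (star : A -> A).
Hypotheses (starD : {morph star : x y / x + y}) (star1 : star 1 = 1)
  (starM : forall x y, star (x * y) = star y * star x)
  (starZ : forall k x, star (k *: x) = conjF k *: star x)
  (starP : star P = P) (starT : star T = Ts) (starTs : star Ts = T)
  (conjF_c : conjF c = c).

Lemma star_rotation : star rotation = rotation_inv.
Proof.
have starN x : star (- x) = - star x by rewrite -scaleN1r starZ rmorphN1 scaleN1r.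
have conj_a : conjF a = a by rewrite rmorphB rmorph1 conjF_c.
have conj_b : conjF b = b by rewrite fmorphV rmorphD rmorph1 conjF_c.
have starX : star X = X.
  by rewrite /rot_sym starD !starZ conj_a conj_b starM starP starT starTs.
have starY : star Y = - Y by rewrite /rot_skew starD starN starT starTs opprB.
by rewrite /rotation /rotation_inv starD starY starD starN star1 starX.
Qed.

End Star.
End RotationAlgebra.

Section Adjoint.
Variable R : realType.
Local Notation C := R[i].

Lemma adjE m p (A : 'M[C]_(m, p)) i j : adj A i j = (A j i)^*.
Proof. by rewrite !mxE. Qed.

Lemma adjK m p (A : 'M[C]_(m, p)) : adj (adj A) = A.
Proof. by apply/matrixP => i j; rewrite !adjE conjcK. Qed.

Lemma adjD m p (A B : 'M[C]_(m, p)) : adj (A + B) = adj A + adj B.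
Proof. by apply/matrixP => i j; rewrite !(adjE, mxE) rmorphD. Qed.

Lemma adjN m p (A : 'M[C]_(m, p)) : adj (- A) = - adj A.
Proof. by apply/matrixP => i j; rewrite !(adjE, mxE) rmorphN. Qed.

Lemma adjB m p (A B : 'M[C]_(m, p)) : adj (A - B) = adj A - adj B.
Proof. by rewrite adjD adjN. Qed.

Lemma adj0 m p : adj (0 : 'M[C]_(m, p)) = 0.
Proof. by apply/matrixP => i j; rewrite !(adjE, mxE) conjc0. Qed.

Lemma adjZ m p a (A : 'M[C]_(m, p)) : adj (a *: A) = a^* *: adj A.
Proof. by apply/matrixP => i j; rewrite !(adjE, mxE) rmorphM. Qed.

Lemma adj_sum m p I (r : seq I) (P : pred I) (F : I -> 'M[C]_(m, p)) :
  adj (\sum_(i <- r | P i) F i) = \sum_(i <- r | P i) adj (F i).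
Proof.
apply/matrixP => i j; rewrite adjE !summxE rmorph_sum.
by apply: eq_bigr => k _; rewrite adjE.
Qed.

Lemma adjM m p q (A : 'M[C]_(m, p)) (B : 'M[C]_(p, q)) :
  adj (A *m B) = adj B *m adj A.
Proof.
apply/matrixP => i j; rewrite adjE !mxE rmorph_sum; apply: eq_bigr => k _.
by rewrite !adjE rmorphM mulrC.
Qed.

Lemma adj_scalar m a : adj (a%:M : 'M[C]_m) = a^*%:M.
Proof.
apply/matrixP => i j; rewrite adjE !mxE eq_sym.
by case: eqP; rewrite ?mulr1n ?mulr0n ?conjc0.
Qed.

Lemma adj1 m : adj (1%:M : 'M[C]_m) = 1%:M.
Proof. by rewrite adj_scalar rmorph1. Qed.

Lemma adj_delta m p (i : 'I_m) (j : 'I_p) :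
  adj (delta_mx i j : 'M[C]_(m, p)) = delta_mx j i.
Proof.
apply/matrixP => a b; rewrite adjE !mxE andbC.
by case: (_ && _); rewrite ?conjc0 ?conjc1.
Qed.

Lemma adj_tens m p q r (A : 'M[C]_(m, p)) (B : 'M[C]_(q, r)) :
  adj (A *t B) = adj A *t adj B.
Proof. by rewrite /adj map_mxT trmx_tens. Qed.

Lemma adj_conjT m p (A : 'M[C]_(m, p)) : adj A = map_mx Num.conj A^T.
Proof. by rewrite /adj map_trmx. Qed.

End Adjoint.

Section TensorProduct.
Variable F : comPzRingType.

Lemma tensmxZr m p q r a (A : 'M[F]_(m, p)) (B : 'M[F]_(q, r)) :
  A *t (a *: B) = a *: (A *t B).
Proof.
apply/matrixP => i j; case: i / (mxtens_indexP i) => i1 i2.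
case: j / (mxtens_indexP j) => j1 j2.
by rewrite [RHS]mxE !tensmxE mxE mulrCA.
Qed.

Lemma tensmx_sumr m p q r I (s : seq I) (P : pred I) (A : 'M[F]_(m, p))
    (B : I -> 'M[F]_(q, r)) :
  A *t (\sum_(i <- s | P i) B i) = \sum_(i <- s | P i) A *t B i.
Proof.
apply/matrixP => i j; case: i / (mxtens_indexP i) => i1 i2.
case: j / (mxtens_indexP j) => j1 j2.
rewrite tensmxE !summxE mulr_sumr; apply: eq_bigr => k _.
by rewrite tensmxE.
Qed.

Lemma mxtrace_delta m (i j : 'I_m) : \tr (delta_mx i j : 'M[F]_m) = (i == j)%:R.
Proof.
rewrite /mxtrace (bigD1 i) //= mxE eqxx big1 ?addr0 // => k /negbTE ki.
by rewrite mxE ki.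
Qed.

End TensorProduct.

Section Dilation.
Variable R : realType.
Local Notation C := R[i].

Lemma ptraceB_tens m n (A : 'M[C]_m) (B : 'M[C]_n) : ptraceB (A *t B) = \tr A *: B.
Proof.
apply/matrixP => a a'; rewrite !mxE mulr_suml; apply: eq_bigr => b _.
by rewrite tensmxE.
Qed.

Lemma ptraceB_sum m n I (s : seq I) (P : pred I) (F : I -> 'M[C]_(m * n)) :
  ptraceB (\sum_(i <- s | P i) F i) = \sum_(i <- s | P i) ptraceB (F i).
Proof.
apply/matrixP => a a'; rewrite mxE summxE.
under eq_bigr do rewrite summxE.
by rewrite exchange_big; apply: eq_bigr => i _; rewrite mxE.
Qed.

Section Ancilla.
Variables m n : nat.

Local Notation ket0 := (delta_mx 0 0 : 'M[C]_m.+1).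

Definition ancilla_proj : 'M[C]_(m.+1 * n) := ket0 *t 1%:M.

Definition dilation_kraus (U : 'M[C]_(m.+1 * n)) (b : 'I_m.+1) : 'M[C]_n :=
  \matrix_(a, x) U (mxtens_index (b, a)) (mxtens_index (ord0, x)).

Definition kraus_stack (L : 'I_m.+1 -> 'M[C]_n) : 'M[C]_(m.+1 * n) :=
  \sum_b delta_mx b 0 *t L b.

Lemma adj_ancilla_proj : adj ancilla_proj = ancilla_proj.
Proof. by rewrite adj_tens adj_delta adj1. Qed.

Lemma ancilla_proj_absorb (rho : 'M[C]_n) :
  ancilla_proj *m (ket0 *t rho) = ket0 *t rho /\
  (ket0 *t rho) *m ancilla_proj = ket0 *t rho.
Proof. by rewrite !tensmx_mul mul_delta_mx mul1mx mulmx1. Qed.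

Lemma adj_kraus_stack (L : 'I_m.+1 -> 'M[C]_n) :
  adj (kraus_stack L) = \sum_b delta_mx 0 b *t adj (L b).
Proof. by rewrite adj_sum; apply: eq_bigr => b _; rewrite adj_tens adj_delta. Qed.

Lemma ptraceB_kraus_stack (L : 'I_m.+1 -> 'M[C]_n) (rho : 'M[C]_n) :
  ptraceB (kraus_stack L *m (ket0 *t rho) *m adj (kraus_stack L)) =
  kraus_channel L rho.
Proof.
rewrite adj_kraus_stack /kraus_stack !mulmx_suml ptraceB_sum; apply: eq_bigr => b _.
rewrite tensmx_mul mul_delta_mx mulmx_sumr ptraceB_sum (bigD1 b) //= big1 ?addr0.
  by rewrite tensmx_mul mul_delta_mx ptraceB_tens mxtrace_delta eqxx scale1r.
move=> c /negbTE cb.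
by rewrite tensmx_mul mul_delta_mx ptraceB_tens mxtrace_delta eq_sym cb scale0r.
Qed.

Lemma mul_ancilla_proj (U : 'M[C]_(m.+1 * n)) :
  U *m ancilla_proj = kraus_stack (dilation_kraus U).
Proof.
apply/matrixP => i j; case: i / (mxtens_indexP i) => b a.
case: j / (mxtens_indexP j) => c x.
rewrite summxE (bigD1 b) //= big1 ?addr0 => [|b' /negbTE b'b]; last first.
  by rewrite tensmxE !mxE eq_sym b'b mul0r.
rewrite tensmxE !mxE eqxx /= (bigD1 (mxtens_index (ord0, x))) //= big1 ?addr0.
  by rewrite tensmxE !mxE !eqxx mulr1 mulrC.
move=> k; case: k / (mxtens_indexP k) => k1 k2.
rewrite (inj_eq (can_inj (@mxtens_indexK _ _))) xpair_eqE negb_and => k12.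
by rewrite tensmxE !mxE; case/orP: k12 => /negbTE->; rewrite /= ?mul0r !mulr0.
Qed.

Lemma dilation_absorb_proj (U : 'M[C]_(m.+1 * n)) (rho : 'M[C]_n) :
  U *m (ket0 *t rho) *m adj U =
  (U *m ancilla_proj) *m (ket0 *t rho) *m adj (U *m ancilla_proj).
Proof.
have [Prho rhoP] := ancilla_proj_absorb rho.
rewrite adjM adj_ancilla_proj !mulmxA; congr (_ *m _).
by rewrite -[in RHS](mulmxA U) Prho -mulmxA rhoP.
Qed.

Lemma ptraceB_dilation (U : 'M[C]_(m.+1 * n)) (rho : 'M[C]_n) :
  ptraceB (U *m (ket0 *t rho) *m adj U) = kraus_channel (dilation_kraus U) rho.
Proof. by rewrite dilation_absorb_proj mul_ancilla_proj ptraceB_kraus_stack. Qed.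

End Ancilla.
End Dilation.

Section KrausInvariant.
Variable R : realType.
Local Notation C := R[i].

Lemma row_norm_gt0 m (v : 'rV[C]_m) : v != 0 -> 0 < (v *m adj v) 0 0.
Proof. by move=> /dotmx_is_dotmx; rewrite dotmxE adj_conjT. Qed.

Lemma col_norm_gt0 m (z : 'cV[C]_m) : z != 0 -> 0 < (adj z *m z) 0 0.
Proof.
move=> z0; rewrite -{2}(adjK z); apply: row_norm_gt0.
by apply: contra z0 => /eqP/(congr1 adj); rewrite adjK => ->; rewrite adj0.
Qed.

Section KrausLinear.
Variables (n p : nat) (L : 'I_p -> 'M[C]_n).

Lemma kraus_channelD A B :
  kraus_channel L (A + B) = kraus_channel L A + kraus_channel L B.
Proof.
by rewrite /kraus_channel -big_split; apply: eq_bigr => j _; rewrite mulmxDr mulmxDl.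
Qed.

Lemma kraus_channelZ x A : kraus_channel L (x *: A) = x *: kraus_channel L A.
Proof.
rewrite /kraus_channel scaler_sumr; apply: eq_bigr => j _.
by rewrite -scalemxAr -scalemxAl.
Qed.

Lemma kraus_channelN A : kraus_channel L (- A) = - kraus_channel L A.
Proof. by rewrite -scaleN1r kraus_channelZ scaleN1r. Qed.

Lemma kraus_channel0 : kraus_channel L 0 = 0.
Proof. by rewrite /kraus_channel big1 // => j _; rewrite mulmx0 mul0mx. Qed.

End KrausLinear.

Lemma outer_entry n (x y : 'cV[C]_n) r s : (x *m adj y) r s = x r 0 * (y s 0)^*.
Proof. by rewrite mxE big_ord1 adjE. Qed.

Lemma polarization n (x y : 'cV[C]_n) :
  x *m adj y = 4%:R^-1 *: ((x + y) *m adj (x + y) - (x - y) *m adj (x - y)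
    + 'i *: ((x + 'i *: y) *m adj (x + 'i *: y))
    - 'i *: ((x - 'i *: y) *m adj (x - 'i *: y))).
Proof.
(* [iJ] stands for the conjugate of ['i], in the form produced by [rmorphM] *)
have key (X Y X' Y' iJ : C) : iJ = - 'i ->
    4%:R^-1 * ((X + Y) * (X' + Y') - (X - Y) * (X' - Y')
      + 'i * ((X + 'i * Y) * (X' + iJ * Y')) - 'i * ((X - 'i * Y) * (X' - iJ * Y')))
    = X * Y'.
  move=> ->; have i2 : 'i * 'i = -1 :> C by rewrite -expr2 sqr_i.
  (* everything cancels except [4 X Y'] and a multiple of [1 + 'i * 'i] *)
  have -> : (X + Y) * (X' + Y') - (X - Y) * (X' - Y')
      + 'i * ((X + 'i * Y) * (X' + - 'i * Y')) - 'i * ((X - 'i * Y) * (X' - - 'i * Y'))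
      = 4%:R * X * Y' + (1 + 'i * 'i) * (2%:R * Y * X' - 2%:R * X * Y') by ring.
  by rewrite i2 addrN mul0r addr0 -mulrA mulKf // pnatr_eq0.
apply/matrixP => r s; rewrite !(outer_entry, mxE) !(rmorphD, rmorphN, rmorphM).
by symmetry; apply: key; apply/eqP; rewrite eq_complex /= oppr0 !eqxx.
Qed.

Lemma col_delta_entry m (A : 'M[C]_m) k r : (A *m (delta_mx k 0 : 'cV_m)) r 0 = A r k.
Proof. by rewrite -colE mxE. Qed.

Lemma kraus_trace_sum n p (L : 'I_p -> 'M[C]_n) :
  \sum_j \tr (L j) * (\tr (L j))^* =
  \sum_k \sum_l (kraus_channel L (delta_mx k l)) k l.
Proof.
have entry k l : (kraus_channel L (delta_mx k l)) k l = \sum_j L j k k * (L j l l)^*.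
  rewrite summxE; apply: eq_bigr => j _.
  rewrite -(mul_delta_mx (0 : 'I_1)) -(adj_delta R l (0 : 'I_1)) mulmxA -mulmxA -adjM.
  by rewrite outer_entry !col_delta_entry.
under [RHS]eq_bigr => k _ do under eq_bigr => l _ do rewrite entry.
under [RHS]eq_bigr => k _ do rewrite exchange_big /=.
rewrite exchange_big /=; apply: eq_bigr => j _.
rewrite /mxtrace rmorph_sum mulr_suml; apply: eq_bigr => k _.
by rewrite mulr_sumr.
Qed.

Section SameChannel.
Variables (n p q : nat) (L : 'I_p -> 'M[C]_n) (L' : 'I_q -> 'M[C]_n).
Hypothesis same_on_density :
  forall rho, density rho -> kraus_channel L rho = kraus_channel L' rho.

Lemma same_on_rank_one (z : 'cV[C]_n) :
  kraus_channel L (z *m adj z) = kraus_channel L' (z *m adj z).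
Proof.
have [->|z0] := eqVneq z 0; first by rewrite mul0mx !kraus_channel0.
have t_gt0 := col_norm_gt0 z0; set t := (adj z *m z) 0 0 in t_gt0.
have -> : z *m adj z = t *: (t^-1 *: (z *m adj z)).
  by rewrite scalerA mulfV ?gt_eqF // scale1r.
rewrite [LHS]kraus_channelZ [RHS]kraus_channelZ same_on_density //; split.
  move=> v; rewrite -scalemxAr -scalemxAl mxE mulmxA -(mulmxA (adj v *m z)).
  have -> : adj z *m v = adj (adj v *m z) by rewrite adjM adjK.
  by rewrite mxE big_ord1 adjE mulr_ge0 ?mulcJ_ge0 // invr_ge0 ltW.
by rewrite mxtraceZ mxtrace_mulC /mxtrace big_ord1 -/t mulVf ?gt_eqF.
Qed.

Lemma same_on_delta (k l : 'I_n) :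
  kraus_channel L (delta_mx k l) = kraus_channel L' (delta_mx k l).
Proof.
rewrite -(mul_delta_mx (0 : 'I_1)) -(adj_delta R l (0 : 'I_1)) polarization.
by rewrite !(kraus_channelZ, kraus_channelD, kraus_channelN) !same_on_rank_one.
Qed.

Lemma same_kraus_trace_sum :
  \sum_j \tr (L j) * (\tr (L j))^* = \sum_j \tr (L' j) * (\tr (L' j))^*.
Proof.
rewrite !kraus_trace_sum; apply: eq_bigr => k _; apply: eq_bigr => l _.
by rewrite same_on_delta.
Qed.

End SameChannel.
End KrausInvariant.

Section UnitarySpectrum.
Variable R : realType.
Local Notation C := R[i].

Lemma unitary_eigenvalue_norm m (U : 'M[C]_m) l :
  U *m adj U = 1%:M -> eigenvalue U l -> l * l^* = 1.
Proof.
move=> UU /eigenvalueP [v Uv v0].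
have : v *m U *m adj (v *m U) = v *m adj v.
  by rewrite adjM mulmxA -(mulmxA v U) UU mulmx1.
rewrite Uv adjZ -scalemxAl -scalemxAr scalerA => /(congr1 (fun M : 'M[C]_1 => M 0 0)).
rewrite mxE => /eqP; rewrite -subr_eq0 -{2}[(v *m adj v) 0 0]mul1r -mulrBl.
by rewrite mulf_eq0 (gt_eqF (row_norm_gt0 v0)) orbF subr_eq0 => /eqP.
Qed.

Lemma unit_circle_expi (l : C) : l * l^* = 1 ->
  exists t : R, - pi < t <= pi /\ l = expi t.
Proof.
case: l => x y /= xy1.
have {}xy1 : x ^+ 2 + y ^+ 2 = 1 by move: xy1; simpc => -[<- _]; rewrite !expr2.
have x_itv : -1 <= x <= 1.
  by rewrite -ler_norml -(@expr_le1 _ 2) // real_normK ?num_real // -xy1 lerDl sqr_ge0.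
have pi_pos : 0 < pi :> R := pi_gt0 R.
have sin_acosx : sin (acos x) = `|y|.
  by rewrite sin_acos // -xy1 addrAC subrr add0r sqrtr_sqr.
have [y_ge0|y_lt0] := lerP 0 y.
  exists (acos x); split; last by rewrite /expi acosK ?in_itv //= sin_acosx ger0_norm.
  by rewrite acos_lepi // andbT (lt_le_trans _ (acos_ge0 x_itv)) // oppr_lt0.
exists (- acos x); split; last first.
  by rewrite /expi cosN sinN acosK ?in_itv //= sin_acosx ltr0_norm // opprK.
rewrite lerNl (le_trans _ (acos_ge0 x_itv)) ?oppr_le0 ?ltW // andbT ltrN2.
rewrite acos_ltpi // (andP x_itv).2 andbT lt_neqAle (andP x_itv).1 andbT.
apply/eqP => x1; move: xy1; rewrite -x1 sqrrN expr1n -{2}(addr0 1) => /addrI /eqP.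
by rewrite sqrf_eq0 lt_eqF.
Qed.

Lemma norm_le_pi (t : R) : - pi < t <= pi -> `|t| <= pi.
Proof.
case/andP=> t_gt t_le.
by have [t0|t0] := lerP 0 t; [rewrite ger0_norm | rewrite ltr0_norm // lerNl ltW].
Qed.

Lemma unitary_eigen_expi m (U : 'M[C]_m) : (0 < m)%N -> U *m adj U = 1%:M ->
  exists t, - pi < t <= pi /\ eigenvalue U (expi t).
Proof.
move=> m_gt0 UU; have [l Ul] := eigenvalue_closed U m_gt0.
have [t [t_itv lt]] := unit_circle_expi (unitary_eigenvalue_norm UU Ul).
by exists t; rewrite -lt.
Qed.

Lemma unitary_cost_ge m (U : 'M[C]_m) t : - pi < t <= pi ->
  eigenvalue U (expi t) -> `|t| <= unitary_cost U.
Proof.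
move=> t_itv Ut; apply: ub_le_sup; last by exists t.
by exists pi => _ [s [s_itv _] <-]; apply: norm_le_pi.
Qed.

Lemma unitary_cost_le m (U : 'M[C]_m) y : (0 < m)%N -> U *m adj U = 1%:M ->
  (forall t, - pi < t <= pi -> eigenvalue U (expi t) -> `|t| <= y) ->
  unitary_cost U <= y.
Proof.
move=> m_gt0 UU Uy; apply: ge_sup; last by move=> _ [t [t_itv Ut] <-]; apply: Uy.
by have [t [t_itv Ut]] := unitary_eigen_expi m_gt0 UU; exists `|t|, t.
Qed.

Lemma unitary_cost_itv m (U : 'M[C]_m) : (0 < m)%N -> U *m adj U = 1%:M ->
  0 <= unitary_cost U <= pi.
Proof.
move=> m_gt0 UU; have [t [t_itv Ut]] := unitary_eigen_expi m_gt0 UU.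
rewrite (le_trans _ (unitary_cost_ge t_itv Ut)) //=.
by apply: unitary_cost_le => // s s_itv _; apply: norm_le_pi.
Qed.

Lemma Re_sum m (F : 'I_m -> C) : complex.Re (\sum_i F i) = \sum_i complex.Re (F i).
Proof. by elim/big_rec2: _ => //= i x y _ <-; case: (F i); case: y. Qed.

Lemma normal_diag_Re_ge m (U : 'M[C]_m) (k : R) :
  adj U *m U = U *m adj U -> (forall l, eigenvalue U l -> k <= complex.Re l) ->
  forall p, k <= complex.Re (U p p).
Proof.
move=> UUC Uk p.
have /orthomx_spectralP : U \is normalmx by apply/normalmxP; rewrite -!adj_conjT.
set Q := spectralmx U; set D := spectral_diag U => UQD.
have Q_unitary : Q *m adj Q = 1%:M.
  by rewrite adj_conjT; apply/unitarymxP/spectral_unitarymx.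
rewrite invmx_unitary ?spectral_unitarymx // -adj_conjT -/Q in UQD.
have D_eigen i : eigenvalue U (D 0 i).
  apply/eigenvalueP; exists (row i Q).
    rewrite -row_mul UQD !mulmxA Q_unitary mul1mx mul_diag_mx.
    by apply/rowP => j; rewrite !mxE.
  apply: contraTneq isT => Qi0.
  have /rowP/(_ i) : row i (Q *m adj Q) = 0 by rewrite row_mul Qi0 mul0mx.
  by rewrite Q_unitary !mxE eqxx /= => /eqP; rewrite oner_eq0.
(* [U p p] is a convex combination of the eigenvalues [D 0 i] *)
have -> : U p p = \sum_i D 0 i * ((Q i p)^* * Q i p).
  rewrite UQD mul_mx_diag mxE; apply: eq_bigr => i _.
  by rewrite !mxE -mulrA mulrCA.
have weights1 : \sum_i complex.Re ((Q i p)^* * Q i p) = 1.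
  have := congr1 (fun M : 'M[C]_m => complex.Re (M p p)) (mulmx1C Q_unitary).
  rewrite /= !mxE eqxx mulr1n /= Re_sum => <-.
  by apply: eq_bigr => i _; rewrite !mxE.
have Re_weighted (z w : C) :
    complex.Re (z * (w^* * w)) = complex.Re z * complex.Re (w^* * w).
  by case: z => ? ?; case: w => ? ?; simpc => /=; ring.
rewrite Re_sum -[k]mulr1 -weights1 mulr_sumr; apply: ler_sum => i _.
rewrite Re_weighted ler_wpM2r ?Uk //.
by case: (Q i p) => ? ?; simpc => /=; nra.
Qed.

End UnitarySpectrum.

Section Trigonometry.
Variable R : realType.

Lemma ler_cos : {in `[0, pi] &, {mono (@cos R) : x y /~ y <= x}}.
Proof. by move=> x y x_itv y_itv; rewrite !leNgt ltr_cos. Qed.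

Lemma acos_le (x t : R) : -1 <= x <= 1 -> t \in `[0, pi] ->
  (acos x <= t) = (cos t <= x).
Proof.
move=> x_itv t_itv; have [acos_itv cos_acos] := acos_def x_itv.
by rewrite -ler_cos ?in_itv //= cos_acos.
Qed.

Lemma le_acos (x t : R) : -1 <= x <= 1 -> t \in `[0, pi] ->
  (t <= acos x) = (x <= cos t).
Proof.
move=> x_itv t_itv; have [acos_itv cos_acos] := acos_def x_itv.
by rewrite -ler_cos ?in_itv //= cos_acos.
Qed.

Lemma le_sqr_sum (x y q : R) : 0 <= q -> x ^+ 2 + y ^+ 2 <= q ^+ 2 -> x <= q.
Proof.
move=> q_ge0 xyq; rewrite leNgt; apply/negP => qx.
have x_ge0 : 0 <= x := le_trans q_ge0 (ltW qx).
have : q ^+ 2 < x ^+ 2 by rewrite ltr_pXn2r ?nnegrE.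
by rewrite ltNge (le_trans _ xyq) // lerDl sqr_ge0.
Qed.

Lemma rotation_root_cos (c t : R) : c <= 1 ->
  (expi t - 1) * (expi t * expi t - (c%:C *+ 2) * expi t + 1) = 0 -> c <= cos t.
Proof.
move=> c_le1 /eqP; rewrite mulf_eq0 => /orP[|].
  by rewrite subr_eq0 /expi => /eqP [-> _].
rewrite /expi; simpc; rewrite eq_complex /= => /andP[/eqP re0 /eqP im0].
have cs1 := cos2Dsin2 t.
set co := cos t in re0 im0 cs1 *; set si := sin t in re0 im0 cs1.
(* the quadratic factor vanishes iff [co = c], by [co ^+ 2 + si ^+ 2 = 1] *)
have co_c : co * (co - c) = 0.
  have -> : co * (co - c) =
      (co * co - si * si - (c + c) * co + 1 - (1 - (co ^+ 2 + si ^+ 2))) / 2%:R by field.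
  by rewrite re0 cs1 subrr subr0 mul0r.
have si_c : si * (co - c) = 0.
  have -> : si * (co - c) = (co * si + si * co - (c + c) * si) / 2%:R by field.
  by rewrite im0 mul0r.
have : co - c = co * (co * (co - c)) + si * (si * (co - c)).
  by rewrite !mulrA -!expr2 -mulrDl cs1 mul1r.
by rewrite co_c si_c !mulr0 addr0 => /eqP; rewrite subr_eq0 => /eqP ->.
Qed.

End Trigonometry.

Lemma eigenvalue_rotation_poly (R : realType) m (X : 'M[R[i]]_m.+1) (v : 'rV_m.+1)
    l b :
  v *m X = l *: v ->
  v *m ((X - 1) * (X * X - b *: X + 1)) = ((l - 1) * (l * l - b * l + 1)) *: v.
Proof.
move=> Xv.
have v_lin : v *m (X - 1) = (l - 1) *: v by rewrite mulmxBr mulmx1 Xv scalerBl scale1r.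
have v_quad : v *m (X * X - b *: X + 1) = (l * l - b * l + 1) *: v.
  have XXv : v *m (X * X) = (l * l) *: v by rewrite mulmxA Xv -scalemxAl Xv scalerA.
  by rewrite mulmxDr mulmxBr mulmx1 -scalemxAr XXv Xv scalerA scalerDl scalerBl scale1r.
by rewrite [_ * _]/(_ *m _) mulmxA v_lin -scalemxAl v_quad scalerA.
Qed.

Section RotationDilation.
Variables (R : realType) (m : nat) (P T : 'M[R[i]]_m.+1) (c : R).
Hypotheses (P_idem : P *m P = P) (PT : P *m T = 0) (TP : T *m P = T)
  (TsP : adj T *m P = 0) (PTs : P *m adj T = adj T)
  (TsT : adj T *m T = (1 - c%:C ^+ 2) *: P) (adjP : adj P = P).
Hypothesis c_itv : 0 <= c <= 1.

Local Notation W := (rotation P T (adj T) c%:C).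

Let c_neqN1 : 1 + c%:C != 0.
Proof.
have -> : 1 + c%:C = (1 + c)%:C by rewrite rmorphD rmorph1.
by rewrite lt0r_neq0 // ltcR ltr_wpDr ?(andP c_itv).1.
Qed.

Lemma adj_rotation : adj W = rotation_inv P T (adj T) c%:C.
Proof.
apply: star_rotation => [x y|||k x||||]; rewrite ?adjK //.
- exact: adjD.
- exact: adj1.
- exact: adjM.
- exact: adjZ.
- exact: conjc_real.
Qed.

Lemma rotation_unitary : unitary W.
Proof.
rewrite /unitary adj_rotation; split.
  exact: (rotation_invK P_idem PT TP TsP PTs TsT c_neqN1).
exact: (rotationK P_idem PT TP TsP PTs TsT c_neqN1).
Qed.

Lemma rotation_mul_proj : W *m P = c%:C *: P + T.
Proof. by rewrite mulmxE rotation_proj. Qed.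

Lemma rotation_cost : unitary_cost W <= acos c.
Proof.
have c_itvN1 : -1 <= c <= 1.
  by rewrite (le_trans _ (andP c_itv).1) ?lerN10 ?(andP c_itv).2.
apply: unitary_cost_le => // [|t t_itv /eigenvalueP [v Wv v0]].
  exact: rotation_unitary.2.
have := eigenvalue_rotation_poly (c%:C *+ 2) Wv.
rewrite rotation_poly // mulmx0 => /esym/eqP.
rewrite scalemx_eq0 (negbTE v0) orbF => /eqP /(rotation_root_cos (andP c_itv).2).
move=> c_cos; rewrite le_acos // ?cos_norm // in_itv /= normr_ge0.
exact: norm_le_pi.
Qed.

End RotationDilation.

Lemma dilation_trace_Re_ge (R : realType) m n (U : 'M[R[i]]_(m.+1 * n.+1)) :
  unitary U ->
  n.+1%:R * cos (unitary_cost U) <= complex.Re (\tr (dilation_kraus U ord0)).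
Proof.
case=> UtU UUt.
have N_gt0 : (0 < m.+1 * n.+1)%N by rewrite muln_gt0.
have /andP[cost_ge0 cost_le_pi] := unitary_cost_itv N_gt0 UUt.
have Re_eigen l : eigenvalue U l -> cos (unitary_cost U) <= complex.Re l.
  move=> Ul; have [t [t_itv lt]] := unit_circle_expi (unitary_eigenvalue_norm UUt Ul).
  rewrite lt in Ul *; rewrite /= -[cos t]cos_norm.
  rewrite ler_cos ?in_itv /= ?cost_ge0 ?normr_ge0 ?norm_le_pi //.
  exact: unitary_cost_ge t_itv Ul.
have U_normal : adj U *m U = U *m adj U by rewrite UtU UUt.
have -> : n.+1%:R * cos (unitary_cost U) = \sum_(a < n.+1) cos (unitary_cost U).
  by rewrite sumr_const card_ord mulr_natl.
rewrite /mxtrace Re_sum.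
by apply: ler_sum => a _; rewrite mxE normal_diag_Re_ge.
Qed.

Section KrausCost.
Variable R : realType.
Local Notation C := R[i].
Variables (d n : nat) (K : 'I_d.+1 -> 'M[C]_n.+1) (alpha : C).
Hypotheses (K_sum : \sum_j adj (K j) *m K j = 1%:M) (K0 : K ord0 = alpha%:M)
  (K_traceless : forall j : 'I_d.+1, j != ord0 -> \tr (K j) = 0).

Local Notation c := (Normc.normc alpha).

Lemma alpha_normK : alpha * alpha^* = (c ^+ 2)%:C.
Proof. by rewrite -sqr_normc rmorphXn; congr (_ ^+ 2); case: alpha. Qed.

Lemma K_tail_sum :
  \sum_(j | j != ord0) adj (K j) *m K j = (1 - (c ^+ 2)%:C)%:M.
Proof.
move: K_sum; rewrite (bigD1 ord0) //= K0 adj_scalar -scalar_mxM mulrC alpha_normK.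
by move/(canRL (addKr _)); rewrite raddfB addrC.
Qed.

Lemma c_ge0 : 0 <= c.
Proof. by case: alpha => a b; exact: sqrtr_ge0. Qed.

Lemma c_itv : -1 <= c <= 1.
Proof.
rewrite (le_trans _ c_ge0) ?lerN10 //=.
have : (0 : C) <= 1 - (c ^+ 2)%:C.
  have := congr1 (fun M : 'M[C]_n.+1 => M 0 0) K_tail_sum.
  rewrite /= mxE eqxx mulr1n => <-; rewrite summxE.
  apply: sumr_ge0 => j _; rewrite mxE; apply: sumr_ge0 => r _.
  by rewrite adjE mulrC mulcJ_ge0.
have -> : 1 - (c ^+ 2)%:C = (1 - c ^+ 2)%:C :> C by rewrite rmorphB rmorph1.
by rewrite ler0c subr_ge0 -(@expr_le1 _ 2 c) ?c_ge0.
Qed.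

Lemma channel_cost_ge m (U : 'M[C]_(m.+1 * n.+1)) :
  implements (kraus_channel K) U -> acos c <= unitary_cost U.
Proof.
case=> U_unitary U_impl.
have N_gt0 : (0 < m.+1 * n.+1)%N by rewrite muln_gt0.
have cost_itv := unitary_cost_itv N_gt0 U_unitary.2.
have same : forall rho, density rho ->
    kraus_channel K rho = kraus_channel (dilation_kraus U) rho.
  by move=> rho rho_dens; rewrite U_impl // ptraceB_dilation.
have := same_kraus_trace_sum same.
rewrite (bigD1 ord0) //= big1 => [|j /K_traceless->]; last by rewrite mul0r.
rewrite K0 mxtrace_scalar addr0.
set z := \tr (dilation_kraus U ord0) => trace_sum.
have z_le : z * z^* <= ((n.+1%:R * c) ^+ 2)%:C.
  have -> : ((n.+1%:R * c) ^+ 2)%:C = alpha *+ n.+1 * (alpha *+ n.+1)^*.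
    rewrite [in RHS]rmorphMn [in RHS]mulrnAl [in RHS]mulrnAr -[in RHS]mulrnA.
    rewrite alpha_normK -rmorphMn.
    by rewrite exprMn -natrX mulr_natl mulnn.
  rewrite trace_sum (bigD1 ord0) //= lerDl.
  by apply: sumr_ge0 => j _; apply: mulcJ_ge0.
have Re_z_le : complex.Re z <= n.+1%:R * c.
  move: z_le; rewrite -sqr_normc normc_def -rmorphXn lecR sqr_sqrtr ?addr_ge0 ?sqr_ge0 //.
  by apply: le_sqr_sum; rewrite mulr_ge0 ?c_ge0.
rewrite acos_le ?c_itv ?in_itv ?cost_itv //.
rewrite -(ler_pM2l (ltr0Sn _ n)).
exact: le_trans (dilation_trace_Re_ge U_unitary) Re_z_le.
Qed.

Definition kraus_tail (j : 'I_d.+1) : 'M[C]_n.+1 := if j == ord0 then 0 else K j.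

Local Notation P := (@ancilla_proj R d n.+1).
Local Notation T := (@kraus_stack R d n.+1 kraus_tail).
Local Notation cC := c%:C.

Let P_idem : P *m P = P.
Proof. by rewrite tensmx_mul mul_delta_mx mul1mx. Qed.

Let PT : P *m T = 0.
Proof.
rewrite mulmx_sumr big1 // => j _; rewrite tensmx_mul mul1mx.
have [->|j0] := eqVneq j ord0; first by rewrite /kraus_tail eqxx tensmx0.
by rewrite mul_delta_mx_0 ?tens0mx // eq_sym.
Qed.

Let TP : T *m P = T.
Proof.
by rewrite mulmx_suml; apply: eq_bigr => j _; rewrite tensmx_mul mul_delta_mx mulmx1.
Qed.

Let TsP : adj T *m P = 0.
Proof.
rewrite adj_kraus_stack mulmx_suml big1 // => j _; rewrite tensmx_mul mulmx1.
have [->|j0] := eqVneq j ord0; first by rewrite /kraus_tail eqxx adj0 tensmx0.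
by rewrite mul_delta_mx_0 ?tens0mx.
Qed.

Let PTs : P *m adj T = adj T.
Proof.
rewrite adj_kraus_stack mulmx_sumr; apply: eq_bigr => j _.
by rewrite tensmx_mul mul_delta_mx mul1mx.
Qed.

Let TsT : adj T *m T = (1 - cC ^+ 2) *: P.
Proof.
rewrite adj_kraus_stack mulmx_suml.
transitivity (\sum_b (delta_mx 0 0 : 'M[C]_d.+1) *t (adj (kraus_tail b) *m kraus_tail b)).
  apply: eq_bigr => b _; rewrite mulmx_sumr (bigD1 b) //= tensmx_mul mul_delta_mx.
  rewrite big1 ?addr0 // => j jb; rewrite tensmx_mul mul_delta_mx_0 ?tens0mx //.
  by rewrite eq_sym.
rewrite -tensmx_sumr -tensmxZr scalemx1 -rmorphXn -K_tail_sum.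
rewrite (bigD1 ord0) //= /kraus_tail eqxx adj0 mul0mx add0r.
by congr (_ *t _); apply: eq_bigr => j /negbTE ->.
Qed.

Local Notation N := (n + d * n.+1).

Definition cost_dilation : 'M[C]_N.+1 := rotation P T (adj T) cC.

Let adjP : adj P = P := adj_ancilla_proj R d n.+1.

Let c_in01 : 0 <= c <= 1.
Proof. by rewrite c_ge0 (andP c_itv).2. Qed.

Lemma cost_dilation_unitary : unitary cost_dilation.
Proof. exact: (@rotation_unitary R N P T c P_idem PT TP TsP PTs TsT adjP c_in01). Qed.

Lemma cost_dilation_cost : unitary_cost cost_dilation <= acos c.
Proof. exact: (@rotation_cost R N P T c P_idem PT TP TsP PTs TsT adjP c_in01). Qed.

Definition kraus_phase (j : 'I_d.+1) : 'M[C]_n.+1 := if j == ord0 then cC%:M else K j.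

Let kraus_phase_stack : cC *: P + T = kraus_stack kraus_phase.
Proof.
rewrite /kraus_stack (bigD1 ord0) //= [in RHS](bigD1 ord0) //=.
rewrite /kraus_tail /kraus_phase eqxx.
rewrite tensmx0 add0r -tensmxZr scalemx1; congr (_ + _).
by apply: eq_bigr => j /negbTE ->.
Qed.

Let kraus_phase_channel rho : kraus_channel kraus_phase rho = kraus_channel K rho.
Proof.
rewrite /kraus_channel (bigD1 ord0) //= [RHS](bigD1 ord0) //= /kraus_phase eqxx K0.
congr (_ + _); last by apply: eq_bigr => j /negbTE ->.
rewrite !adj_scalar !mul_mx_scalar !mul_scalar_mx !scalerA.
congr (_ *: _); rewrite mulrC [RHS]mulrC.
change (cC * cC^*%C = alpha * alpha^*%C).
by rewrite alpha_normK conjc_real -rmorphM expr2.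
Qed.

Lemma cost_dilation_implements :
  implements (kraus_channel K) (cost_dilation : 'M_(d.+1 * n.+1)).
Proof.
split=> [|rho _]; first exact: cost_dilation_unitary.
rewrite dilation_absorb_proj.
rewrite (@rotation_mul_proj R N P T c) //.
by rewrite kraus_phase_stack ptraceB_kraus_stack kraus_phase_channel.
Qed.

Theorem kraus_channel_cost : channel_cost (kraus_channel K) = acos c.
Proof.
rewrite /channel_cost; set S := (X in inf X).
have S_dil : S (unitary_cost cost_dilation).
  by exists d, cost_dilation; split=> //; exact: cost_dilation_implements.
have S_lb : lbound S (acos c) by move=> _ [m [U [UK ->]]]; exact: channel_cost_ge UK.
apply/le_anti/andP; split; last by apply: lb_le_inf => //; exists (unitary_cost cost_dilation).
by apply: le_trans (ge_inf _ S_dil) cost_dilation_cost; exists (acos c).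
Qed.

End KrausCost.

Theorem theorem3 (R : realType) (n d : nat) (K : 'I_d.+1 -> 'M[R[i]]_n)
  (alpha : R[i]) :
  (0 < n)%N ->
  \sum_(j < d.+1) adj (K j) *m K j = 1%:M ->
  K ord0 = alpha%:M ->
  (forall j : 'I_d.+1, j != ord0 -> \tr (K j) = 0) ->
  channel_cost (kraus_channel K) = acos (Normc.normc alpha).
Proof.
case: n K => [//|n] K _ K_sum K0 K_traceless.
exact: kraus_channel_cost K_sum K0 K_traceless.
Qed.
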